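(* Let $n\ge2$ be an integer and $\lambda>0$. Consider the system of ODEs in $(\omega,x,y)\in\mathbb{R}^3$ $$\frac{d\omega}{dt}=x\omega,\qquad \frac{dx}{dt}=X(\omega,x,y):=x^2-xy+n-1-\lambda\omega^2,\qquad \frac{dy}{dt}=xy-nx^2-\lambda\omega^2,$$ restricted to trajectories lying in the half-space $\{\omega>0\}$. Then the regions $$\{x\ge 1,\ X(\omega,x,y)\ge 0\},\quad \{x\le -1,\ X(\omega,x,y)\le 0\},\quad \{y\le 0\}$$ are preserved by the system for increasing $t$, and the regions $$\{x\ge 1,\ X(\omega,x,y)\le 0\},\quad \{x\le -1,\ X(\omega,x,y)\ge 0\},\quad \{y\ge 0\}$$ are preserved by the system for decreasing $t$.
   Context: A set $V\subset\mathbb{R}^3$ is preserved for increasing $t$ if for every solution $\gamma(t)=(\omega(t),x(t),y(t))$ of the system (with $\omega>0$), $\gamma(t_0)\in V$ implies $\gamma(t)\in V$ for all $t>t_0$ for which the solution is defined; preserved for decreasing $t$ is defined analogously with $t<t_0$. Note that along a solution, $X(\omega(t),x(t),y(t))=\frac{dx}{dt}(t)$. *)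

From Stdlib Require Import Reals.
From Coquelicot Require Import Coquelicot.
Open Scope R_scope.

Definition Xf (n : nat) (lam w x y : R) : R :=
  x ^ 2 - x * y + INR n - 1 - lam * w ^ 2.

Definition Yf (n : nat) (lam w x y : R) : R :=
  x * y - INR n * x ^ 2 - lam * w ^ 2.

Definition in_int (a b : Rbar) (t : R) : Prop :=
  Rbar_lt a (Finite t) /\ Rbar_lt (Finite t) b.

Definition is_solution (n : nat) (lam : R) (a b : Rbar) (w x y : R -> R) : Prop :=
  forall t, in_int a b t ->
    0 < w t /\
    is_derive w t (x t * w t) /\
    is_derive x t (Xf n lam (w t) (x t) (y t)) /\
    is_derive y t (Yf n lam (w t) (x t) (y t)).

Definition preserved_incr (n : nat) (lam : R) (V : R -> R -> R -> Prop) : Prop :=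
  forall a b w x y, is_solution n lam a b w x y ->
  forall t0 t, in_int a b t0 -> in_int a b t -> t0 < t ->
  V (w t0) (x t0) (y t0) -> V (w t) (x t) (y t).

Definition preserved_decr (n : nat) (lam : R) (V : R -> R -> R -> Prop) : Prop :=
  forall a b w x y, is_solution n lam a b w x y ->
  forall t0 t, in_int a b t0 -> in_int a b t -> t < t0 ->
  V (w t0) (x t0) (y t0) -> V (w t) (x t) (y t).

From Pilot Require Import Defs.
From Stdlib Require Import Reals Lra Lia.
From Coquelicot Require Import Coquelicot.
Open Scope R_scope.

(* Each region is the closed quadrant {u >= 0, v >= 0} for two functions u, v of the
   solution obeying a cooperative system of linear differential inequalities
   u' >= A1 u + B1 v, v' >= A2 v + B2 u, where B1 >= 0 wherever v >= 0 and B2 >= 0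
   wherever u >= 0 (with reversed inequalities for decreasing t).  For {x >= 1, X >= 0}
   take u = x - 1, v = X, since X' = (3x - y) X + (n - 1) x (x + 1) (x - 1); for {y <= 0}
   take u = v = -y, since (-y)' = x (-y) + n x^2 + lambda w^2.  The squared distance phi
   of (u, v) to the quadrant is C^1 and satisfies phi' <= C phi (phi' >= -C phi for
   reversed time) on a compact time interval, C bounding the continuous coefficients,
   so by Gronwall phi stays 0. *)

Lemma derive_nonpos_le (f df : R -> R) (a b : R) :
  a <= b ->
  (forall z, a <= z <= b -> is_derive f z (df z)) ->
  (forall z, a <= z <= b -> df z <= 0) ->
  f b <= f a.
Proof.
  intros Hab Hf Hdf.
  destruct (Req_dec a b) as [<-|Hne]; [lra|].
  destruct (MVT_cor2 f df a b) as [c [Hmvt Hc]]; [lra| |].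
  - intros z Hz; apply is_derive_Reals, Hf, Hz.
  - assert (df c <= 0) by (apply Hdf; lra). nra.
Qed.

Lemma is_derive_exp_mul (k : R) (phi : R -> R) (z dphi : R) :
  is_derive phi z dphi ->
  is_derive (fun t => exp (k * t) * phi t) z (exp (k * z) * (dphi + k * phi z)).
Proof.
  intros Hphi.
  replace (exp (k * z) * (dphi + k * phi z))
    with (k * exp (k * z) * phi z + exp (k * z) * dphi) by ring.
  apply (is_derive_mult (fun t => exp (k * t)) phi); [| exact Hphi | intros; apply Rmult_comm].
  auto_derive; [exact I | ring].
Qed.

Lemma gronwall_fwd_nonpos (phi dphi : R -> R) (C a b : R) :
  a <= b ->
  (forall z, a <= z <= b -> is_derive phi z (dphi z)) ->
  (forall z, a <= z <= b -> dphi z <= C * phi z) ->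
  phi a <= 0 -> phi b <= 0.
Proof.
  intros Hab Hphi Hrate Ha.
  assert (Hmono : exp (- C * b) * phi b <= exp (- C * a) * phi a).
  { apply (derive_nonpos_le (fun z => exp (- C * z) * phi z)
             (fun z => exp (- C * z) * (dphi z + - C * phi z)) a b Hab).
    - intros z Hz; apply is_derive_exp_mul, Hphi, Hz.
    - intros z Hz. assert (0 < exp (- C * z)) by apply exp_pos.
      assert (dphi z <= C * phi z) by (apply Hrate, Hz). nra. }
  assert (0 < exp (- C * a)) by apply exp_pos.
  assert (0 < exp (- C * b)) by apply exp_pos.
  nra.
Qed.

Lemma gronwall_bwd_nonpos (phi dphi : R -> R) (C a b : R) :
  a <= b ->
  (forall z, a <= z <= b -> is_derive phi z (dphi z)) ->
  (forall z, a <= z <= b -> - C * phi z <= dphi z) ->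
  phi b <= 0 -> phi a <= 0.
Proof.
  intros Hab Hphi Hrate Hb.
  assert (Hmono : - (exp (C * b) * phi b) <= - (exp (C * a) * phi a)).
  { apply (derive_nonpos_le (fun z => - (exp (C * z) * phi z))
             (fun z => - (exp (C * z) * (dphi z + C * phi z))) a b Hab).
    - intros z Hz; exact (is_derive_opp _ _ _ (is_derive_exp_mul C phi z _ (Hphi z Hz))).
    - intros z Hz. assert (0 < exp (C * z)) by apply exp_pos.
      assert (- C * phi z <= dphi z) by (apply Hrate, Hz). nra. }
  assert (0 < exp (C * a)) by apply exp_pos.
  assert (0 < exp (C * b)) by apply exp_pos.
  nra.
Qed.

Lemma is_derive_Rmin0_sqr (z : R) :
  is_derive (fun t => Rmin t 0 ^ 2) z (2 * Rmin z 0).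
Proof.
  destruct (Rtotal_order z 0) as [Hz|[->|Hz]].
  - rewrite Rmin_left by lra.
    apply (is_derive_ext_loc (fun t => t ^ 2)).
    + apply (filter_imp (fun t => t < 0)); [|exact (open_lt 0 z Hz)].
      intros t Ht; rewrite Rmin_left by lra; reflexivity.
    + auto_derive; [exact I | ring].
  - rewrite Rmin_right by lra.
    apply is_derive_Reals. intros eps Heps. exists (mkposreal eps Heps).
    intros h Hh0 Hh. simpl in Hh.
    replace ((Rmin (0 + h) 0 ^ 2 - Rmin 0 0 ^ 2) / h - 2 * 0) with (Rmin h 0 ^ 2 / h)
      by (rewrite Rplus_0_l, (Rmin_right 0 0) by lra; field; exact Hh0).
    destruct (Rle_dec h 0).
    + rewrite Rmin_left by lra.
      replace (h ^ 2 / h) with h by (field; exact Hh0). exact Hh.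
    + rewrite Rmin_right by lra.
      replace (0 ^ 2 / h) with 0 by (field; exact Hh0). rewrite Rabs_R0; lra.
  - rewrite Rmin_right by lra.
    apply (is_derive_ext_loc (fun _ => 0)).
    + apply (filter_imp (fun t => 0 < t)); [|exact (open_gt 0 z Hz)].
      intros t Ht; simpl; rewrite Rmin_right by lra; ring.
    + auto_derive; [exact I | ring].
Qed.

Lemma is_derive_comp_Rmin0_sqr (u : R -> R) (z du : R) :
  is_derive u z du ->
  is_derive (fun t => Rmin (u t) 0 ^ 2) z (2 * Rmin (u z) 0 * du).
Proof.
  intros Hu.
  replace (2 * Rmin (u z) 0 * du) with (scal du (2 * Rmin (u z) 0)).
  - exact (is_derive_comp (fun t => Rmin t 0 ^ 2) u z _ _ (is_derive_Rmin0_sqr _) Hu).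
  - unfold scal; simpl; unfold mult; simpl; ring.
Qed.

Lemma cooperative_rate_le (u v A1 B1 A2 B2 K : R) :
  (0 <= v -> 0 <= B1) -> (0 <= u -> 0 <= B2) ->
  Rabs A1 <= K -> Rabs B1 <= K -> Rabs A2 <= K -> Rabs B2 <= K ->
  2 * Rmin u 0 * (A1 * u + B1 * v) + 2 * Rmin v 0 * (A2 * v + B2 * u)
  <= 4 * K * (Rmin u 0 ^ 2 + Rmin v 0 ^ 2).
Proof.
  intros HB1 HB2 HA1K HB1K HA2K HB2K.
  apply Rabs_le_between in HA1K, HB1K, HA2K, HB2K.
  assert (HK : 0 <= K) by lra.
  destruct (Rle_or_lt 0 u) as [Hu|Hu]; destruct (Rle_or_lt 0 v) as [Hv|Hv].
  - rewrite !Rmin_right by lra. lra.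
  - rewrite (Rmin_right u), (Rmin_left v) by lra.
    specialize (HB2 Hu).
    assert (0 <= B2 * u) by (apply Rmult_le_pos; lra).
    assert (A2 * (v * v) <= K * (v * v)) by (apply Rmult_le_compat_r; nra).
    nra.
  - rewrite (Rmin_left u), (Rmin_right v) by lra.
    specialize (HB1 Hv).
    assert (0 <= B1 * v) by (apply Rmult_le_pos; lra).
    assert (A1 * (u * u) <= K * (u * u)) by (apply Rmult_le_compat_r; nra).
    nra.
  - rewrite !Rmin_left by lra.
    assert (A1 * (u * u) <= K * (u * u)) by (apply Rmult_le_compat_r; nra).
    assert (A2 * (v * v) <= K * (v * v)) by (apply Rmult_le_compat_r; nra).
    assert ((B1 + B2) * (u * v) <= 2 * K * (u * v)) by (apply Rmult_le_compat_r; nra).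
    assert (2 * (u * v) <= u * u + v * v) by (pose proof (pow2_ge_0 (u - v)); nra).
    nra.
Qed.

Section CooperativeSystem.

Variables (u v du dv A1 B1 A2 B2 : R -> R) (a b : R).
Hypothesis Hab : a <= b.
Hypothesis Hu : forall z, a <= z <= b -> is_derive u z (du z).
Hypothesis Hv : forall z, a <= z <= b -> is_derive v z (dv z).
Hypothesis HA1 : forall z, a <= z <= b -> continuity_pt A1 z.
Hypothesis HB1 : forall z, a <= z <= b -> continuity_pt B1 z.
Hypothesis HA2 : forall z, a <= z <= b -> continuity_pt A2 z.
Hypothesis HB2 : forall z, a <= z <= b -> continuity_pt B2 z.
Hypothesis HB1_nonneg : forall z, a <= z <= b -> 0 <= v z -> 0 <= B1 z.
Hypothesis HB2_nonneg : forall z, a <= z <= b -> 0 <= u z -> 0 <= B2 z.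

Let dist2_quadrant (z : R) : R := Rmin (u z) 0 ^ 2 + Rmin (v z) 0 ^ 2.

Let rate (z : R) : R :=
  2 * Rmin (u z) 0 * (A1 z * u z + B1 z * v z) +
  2 * Rmin (v z) 0 * (A2 z * v z + B2 z * u z).

Lemma is_derive_dist2_quadrant (z : R) : a <= z <= b ->
  is_derive dist2_quadrant z (2 * Rmin (u z) 0 * du z + 2 * Rmin (v z) 0 * dv z).
Proof.
  intros Hz.
  apply (is_derive_plus (fun t => Rmin (u t) 0 ^ 2) (fun t => Rmin (v t) 0 ^ 2));
    apply is_derive_comp_Rmin0_sqr; auto.
Qed.

Lemma dist2_quadrant_nonpos (z : R) :
  dist2_quadrant z <= 0 <-> 0 <= u z /\ 0 <= v z.
Proof.
  unfold dist2_quadrant.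
  pose proof (Rmin_l (u z) 0); pose proof (Rmin_r (u z) 0).
  pose proof (Rmin_l (v z) 0); pose proof (Rmin_r (v z) 0).
  split.
  - intros Hle. split.
    + destruct (Rle_or_lt 0 (u z)) as [|Hneg]; [assumption|].
      rewrite Rmin_left in Hle by lra. nra.
    + destruct (Rle_or_lt 0 (v z)) as [|Hneg]; [assumption|].
      rewrite (Rmin_left (v z)) in Hle by lra. nra.
  - intros [Hu0 Hv0]. rewrite !Rmin_right by lra. lra.
Qed.

Lemma rate_le_dist2_quadrant :
  exists C, forall z, a <= z <= b -> rate z <= C * dist2_quadrant z.
Proof.
  set (size z := Rabs (A1 z) + Rabs (B1 z) + Rabs (A2 z) + Rabs (B2 z)).
  destruct (continuity_ab_maj size a b Hab) as [M [HM _]].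
  { intros z Hz. specialize (HA1 z Hz); specialize (HB1 z Hz).
    specialize (HA2 z Hz); specialize (HB2 z Hz). unfold size; reg. }
  exists (4 * size M). intros z Hz. specialize (HM z Hz).
  pose proof (Rabs_pos (A1 z)); pose proof (Rabs_pos (B1 z)).
  pose proof (Rabs_pos (A2 z)); pose proof (Rabs_pos (B2 z)).
  apply cooperative_rate_le; auto; unfold size in *; lra.
Qed.

Theorem cooperative_nonneg_fwd :
  (forall z, a <= z <= b -> A1 z * u z + B1 z * v z <= du z) ->
  (forall z, a <= z <= b -> A2 z * v z + B2 z * u z <= dv z) ->
  0 <= u a -> 0 <= v a -> 0 <= u b /\ 0 <= v b.
Proof.
  intros Hdu Hdv Hua Hva.
  destruct rate_le_dist2_quadrant as [C HC].
  apply dist2_quadrant_nonpos, (gronwall_fwd_nonpos _ _ C a b Hab is_derive_dist2_quadrant).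
  - intros z Hz. eapply Rle_trans; [|apply (HC z Hz)]. unfold rate.
    specialize (Hdu z Hz); specialize (Hdv z Hz).
    pose proof (Rmin_r (u z) 0); pose proof (Rmin_r (v z) 0). nra.
  - apply dist2_quadrant_nonpos; auto.
Qed.

Theorem cooperative_nonneg_bwd :
  (forall z, a <= z <= b -> du z <= - (A1 z * u z + B1 z * v z)) ->
  (forall z, a <= z <= b -> dv z <= - (A2 z * v z + B2 z * u z)) ->
  0 <= u b -> 0 <= v b -> 0 <= u a /\ 0 <= v a.
Proof.
  intros Hdu Hdv Hub Hvb.
  destruct rate_le_dist2_quadrant as [C HC].
  apply dist2_quadrant_nonpos, (gronwall_bwd_nonpos _ _ C a b Hab is_derive_dist2_quadrant).
  - intros z Hz. specialize (HC z Hz). unfold rate in HC.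
    specialize (Hdu z Hz); specialize (Hdv z Hz).
    pose proof (Rmin_r (u z) 0); pose proof (Rmin_r (v z) 0). nra.
  - apply dist2_quadrant_nonpos; auto.
Qed.

End CooperativeSystem.

(* [Reals] exports an unrelated [in_int], hence the qualified name [Defs.in_int]. *)
Lemma in_int_between (a b : Rbar) (t0 t1 z : R) :
  Defs.in_int a b t0 -> Defs.in_int a b t1 -> t0 <= z <= t1 -> Defs.in_int a b z.
Proof.
  intros [Ha _] [_ Hb] Hz. split.
  - apply (Rbar_lt_le_trans _ t0); [exact Ha | simpl; lra].
  - apply (Rbar_le_lt_trans _ t1); [simpl; lra | exact Hb].
Qed.

Ltac derive_along_solution :=
  auto_derive;
  [ repeat split; try (eexists; eassumption)
  | repeat match goal with
    | |- context [Derive ?f ?z] => erewrite (is_derive_unique f z) by eassumption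
    end;
    unfold Xf, Yf; ring ].

Lemma sign_cubic (c s x : R) : s * s = 1 ->
  c * (s * x) * (s * x + 1) * (s * x - 1) = s * (c * x * (x + 1) * (x - 1)).
Proof.
  intros Hs.
  transitivity (c * s * x * ((s * s) * (x * x) - 1)); [ring|].
  rewrite Hs; ring.
Qed.

Section Solution.

Variables (n : nat) (lam : R) (a b : Rbar) (w x y : R -> R).
Hypothesis Hsol : is_solution n lam a b w x y.

Lemma solution_continuity (z : R) : Defs.in_int a b z ->
  continuity_pt x z /\ continuity_pt y z.
Proof.
  intros Hz. destruct (Hsol z Hz) as (_ & _ & Hx & Hy).
  repeat split; apply derivable_continuous_pt; eexists; apply is_derive_Reals; eassumption.
Qed.

Lemma is_derive_Xf_solution (z : R) : Defs.in_int a b z ->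
  is_derive (fun t => Xf n lam (w t) (x t) (y t)) z
    ((3 * x z - y z) * Xf n lam (w z) (x z) (y z)
     + (INR n - 1) * x z * (x z + 1) * (x z - 1)).
Proof.
  intros Hz. destruct (Hsol z Hz) as (_ & Hw & Hx & Hy).
  unfold Xf at 1. derive_along_solution.
Qed.

End Solution.

Lemma preserved_incr_sign (n : nat) (lam s : R) : (1 <= n)%nat -> s * s = 1 ->
  preserved_incr n lam (fun w x y => 1 <= s * x /\ 0 <= s * Xf n lam w x y).
Proof.
  intros Hn Hs a b w x y Hsol t0 t Ht0 Ht Hlt [Hx0 HX0].
  pose proof (fun z => in_int_between a b t0 t z Ht0 Ht) as Hin.
  assert (Hn1 : 1 <= INR n) by exact (le_INR 1 n Hn).
  enough (0 <= s * x t - 1 /\ 0 <= s * Xf n lam (w t) (x t) (y t)) by lra.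
  apply (cooperative_nonneg_fwd
    (fun z => s * x z - 1) (fun z => s * Xf n lam (w z) (x z) (y z))
    (fun z => s * Xf n lam (w z) (x z) (y z))
    (fun z => s * ((3 * x z - y z) * Xf n lam (w z) (x z) (y z)
                   + (INR n - 1) * x z * (x z + 1) * (x z - 1)))
    (fun _ => 0) (fun _ => 1) (fun z => 3 * x z - y z)
    (fun z => (INR n - 1) * (s * x z) * (s * x z + 1)) t0 t); cbv beta; try lra.
  all: intros z Hz; specialize (Hin z Hz);
    destruct (Hsol z Hin) as (_ & Hw & Hx & Hy);
    destruct (solution_continuity n lam a b w x y Hsol z Hin) as (Cx & Cy).
  - derive_along_solution.
  - apply is_derive_scal, (is_derive_Xf_solution n lam a b w x y Hsol z Hin).
  - reg.
  - reg.
  - reg.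
  - reg.
  - intros; lra.
  - intros Hu. apply Rmult_le_pos; [apply Rmult_le_pos|]; lra.
  - lra.
  - rewrite (sign_cubic _ _ _ Hs). apply Req_le. ring.
Qed.

Lemma preserved_decr_sign (n : nat) (lam s : R) : (1 <= n)%nat -> s * s = 1 ->
  preserved_decr n lam (fun w x y => 1 <= s * x /\ s * Xf n lam w x y <= 0).
Proof.
  intros Hn Hs a b w x y Hsol t0 t Ht0 Ht Hlt [Hx0 HX0].
  pose proof (fun z => in_int_between a b t t0 z Ht Ht0) as Hin.
  assert (Hn1 : 1 <= INR n) by exact (le_INR 1 n Hn).
  enough (0 <= s * x t - 1 /\ 0 <= - s * Xf n lam (w t) (x t) (y t)) by lra.
  apply (cooperative_nonneg_bwd
    (fun z => s * x z - 1) (fun z => - s * Xf n lam (w z) (x z) (y z))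
    (fun z => s * Xf n lam (w z) (x z) (y z))
    (fun z => - s * ((3 * x z - y z) * Xf n lam (w z) (x z) (y z)
                     + (INR n - 1) * x z * (x z + 1) * (x z - 1)))
    (fun _ => 0) (fun _ => 1) (fun z => - (3 * x z - y z))
    (fun z => (INR n - 1) * (s * x z) * (s * x z + 1)) t t0); cbv beta; try lra.
  all: intros z Hz; specialize (Hin z Hz);
    destruct (Hsol z Hin) as (_ & Hw & Hx & Hy);
    destruct (solution_continuity n lam a b w x y Hsol z Hin) as (Cx & Cy).
  - derive_along_solution.
  - apply is_derive_scal, (is_derive_Xf_solution n lam a b w x y Hsol z Hin).
  - reg.
  - reg.
  - reg.
  - reg.
  - intros; lra.
  - intros Hu. apply Rmult_le_pos; [apply Rmult_le_pos|]; lra.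
  - lra.
  - rewrite (sign_cubic _ _ _ Hs). apply Req_le. ring.
Qed.

Lemma Yf_le_mul (n : nat) (lam w x y : R) : 0 <= lam -> Yf n lam w x y <= x * y.
Proof.
  intros Hlam. unfold Yf.
  pose proof (pos_INR n); pose proof (pow2_ge_0 x); pose proof (pow2_ge_0 w). nra.
Qed.

Lemma preserved_incr_y_nonpos (n : nat) (lam : R) : 0 <= lam ->
  preserved_incr n lam (fun w x y => y <= 0).
Proof.
  intros Hlam a b w x y Hsol t0 t Ht0 Ht Hlt Hy0.
  pose proof (fun z => in_int_between a b t0 t z Ht0 Ht) as Hin.
  enough (0 <= - y t /\ 0 <= - y t) by lra.
  apply (cooperative_nonneg_fwd
    (fun z => - y z) (fun z => - y z)
    (fun z => - Yf n lam (w z) (x z) (y z)) (fun z => - Yf n lam (w z) (x z) (y z))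
    x (fun _ => 0) x (fun _ => 0) t0 t); cbv beta; try lra.
  all: intros z Hz; specialize (Hin z Hz);
    destruct (Hsol z Hin) as (_ & Hw & Hx & Hy);
    destruct (solution_continuity n lam a b w x y Hsol z Hin) as (Cx & Cy).
  - derive_along_solution.
  - derive_along_solution.
  - reg.
  - reg.
  - reg.
  - reg.
  - intros; lra.
  - intros; lra.
  - pose proof (Yf_le_mul n lam (w z) (x z) (y z) Hlam). lra.
  - pose proof (Yf_le_mul n lam (w z) (x z) (y z) Hlam). lra.
Qed.

Lemma preserved_decr_y_nonneg (n : nat) (lam : R) : 0 <= lam ->
  preserved_decr n lam (fun w x y => 0 <= y).
Proof.
  intros Hlam a b w x y Hsol t0 t Ht0 Ht Hlt Hy0.
  pose proof (fun z => in_int_between a b t t0 z Ht Ht0) as Hin.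
  enough (0 <= y t /\ 0 <= y t) by lra.
  apply (cooperative_nonneg_bwd
    y y (fun z => Yf n lam (w z) (x z) (y z)) (fun z => Yf n lam (w z) (x z) (y z))
    (fun z => - x z) (fun _ => 0) (fun z => - x z) (fun _ => 0) t t0); cbv beta; try lra.
  all: intros z Hz; specialize (Hin z Hz);
    destruct (Hsol z Hin) as (_ & Hw & Hx & Hy);
    destruct (solution_continuity n lam a b w x y Hsol z Hin) as (Cx & Cy).
  - exact Hy.
  - exact Hy.
  - reg.
  - reg.
  - reg.
  - reg.
  - intros; lra.
  - intros; lra.
  - pose proof (Yf_le_mul n lam (w z) (x z) (y z) Hlam). lra.
  - pose proof (Yf_le_mul n lam (w z) (x z) (y z) Hlam). lra.
Qed.

Lemma preserved_incr_iff (n : nat) (lam : R) (V V' : R -> R -> R -> Prop) :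
  preserved_incr n lam V -> (forall w x y, V w x y <-> V' w x y) ->
  preserved_incr n lam V'.
Proof.
  intros HV Hiff a b w x y Hsol t0 t Ht0 Ht Hlt H0.
  apply Hiff, (HV a b w x y Hsol t0 t Ht0 Ht Hlt), Hiff, H0.
Qed.

Lemma preserved_decr_iff (n : nat) (lam : R) (V V' : R -> R -> R -> Prop) :
  preserved_decr n lam V -> (forall w x y, V w x y <-> V' w x y) ->
  preserved_decr n lam V'.
Proof.
  intros HV Hiff a b w x y Hsol t0 t Ht0 Ht Hlt H0.
  apply Hiff, (HV a b w x y Hsol t0 t Ht0 Ht Hlt), Hiff, H0.
Qed.

Theorem lemma3p2 (n : nat) (lam : R) (hn : (2 <= n)%nat) (hlam : 0 < lam) :
  preserved_incr n lam (fun w x y => 1 <= x /\ 0 <= Xf n lam w x y) /\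
  preserved_incr n lam (fun w x y => x <= -1 /\ Xf n lam w x y <= 0) /\
  preserved_incr n lam (fun w x y => y <= 0) /\
  preserved_decr n lam (fun w x y => 1 <= x /\ Xf n lam w x y <= 0) /\
  preserved_decr n lam (fun w x y => x <= -1 /\ 0 <= Xf n lam w x y) /\
  preserved_decr n lam (fun w x y => 0 <= y).
Proof.
  assert (Hn : (1 <= n)%nat) by lia.
  assert (Hlam : 0 <= lam) by lra.
  assert (Hpos : 1 * 1 = 1) by ring.
  assert (Hneg : -1 * -1 = 1) by ring.
  split; [|split; [|split; [|split; [|split]]]].
  - apply (preserved_incr_iff n lam _ _ (preserved_incr_sign n lam 1 Hn Hpos)); intros; lra.
  - apply (preserved_incr_iff n lam _ _ (preserved_incr_sign n lam (-1) Hn Hneg)); intros; lra.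
  - exact (preserved_incr_y_nonpos n lam Hlam).
  - apply (preserved_decr_iff n lam _ _ (preserved_decr_sign n lam 1 Hn Hpos)); intros; lra.
  - apply (preserved_decr_iff n lam _ _ (preserved_decr_sign n lam (-1) Hn Hneg)); intros; lra.
  - exact (preserved_decr_y_nonneg n lam Hlam).
Qed.
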